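(* Let $W$ be a channel from $\{1,2,3\}$ to $\{1,2\}$. If the six entries $W_{i,j}$ are pairwise distinct and each column sum of $W$ is at least $1$, then $\overline{C}_{01}(W)<\overline{C}_{11}(W)$.
   Context: A channel is a row-stochastic matrix. With $\mathcal{X}=\{1,2,3\}$, $\mathcal{Y}=\{1,2\}$, a deterministic channel is a 0-1 channel (a map $D:\mathcal{X}\to\mathcal{Y}$); $\mathcal{D}$ is the set of them, $\mathrm{rank}(D)$ the matrix rank. $\Lambda(W)=\{\lambda\text{ probability distribution on }\mathcal{D}: W=\sum_D\lambda_DD\}$. $I(\mu,K)=\sum_x\mu_xD(K_{x,*}\|\mu K)$ (KL divergence, base 2). $C_{11}(\lambda)=\sum_D\lambda_D\log_2\mathrm{rank}(D)$, $C_{01}(\lambda)=\max_\mu\sum_D\lambda_D I(\mu,D)$ over distributions $\mu$ on $\mathcal{X}$. $\overline{C}_f(W)=\sup_{\lambda\in\Lambda(W)}C_f(\lambda)$ for $f\in\{01,11\}$. *)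

From HB Require Import structures.
From mathcomp Require Import all_boot all_order all_algebra.
From mathcomp Require Import classical_sets reals exp.
Set Implicit Arguments. Unset Strict Implicit. Unset Printing Implicit Defensive.
Import Order.TTheory GRing.Theory Num.Theory.
Local Open Scope ring_scope.
Local Open Scope classical_set_scope.

Section Defs.
Variable R : realType.

Definition log2 (x : R) : R := ln x / ln 2.

(* channels X -> Y are row-stochastic matrices 'M[R]_(#X, #Y) *)
Definition stochastic_row {n : nat} (p : 'rV[R]_n) : Prop :=
  (forall j, 0 <= p 0 j) /\ \sum_j p 0 j = 1.

Definition is_channel {m n : nat} (W : 'M[R]_(m, n)) : Prop :=
  forall i, stochastic_row (row i W).

Definition is_distr {T : finType} (mu : {ffun T -> R}) : Prop :=
  (forall t, 0 <= mu t) /\ \sum_t mu t = 1.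

Definition detmap := {ffun 'I_3 -> 'I_2}.
Definition detmx (D : detmap) : 'M[R]_(3, 2) := \matrix_(x, y) (D x == y)%:R.

Definition KL {n : nat} (p q : 'rV[R]_n) : R :=
  \sum_j (if p 0 j == 0 then 0 else p 0 j * log2 (p 0 j / q 0 j)).

Definition outdist {m n : nat} (mu : {ffun 'I_m -> R}) (K : 'M[R]_(m, n)) : 'rV[R]_n :=
  \row_y \sum_x mu x * K x y.

Definition MI {m n : nat} (mu : {ffun 'I_m -> R}) (K : 'M[R]_(m, n)) : R :=
  \sum_x mu x * KL (row x K) (outdist mu K).

Definition Lambda (W : 'M[R]_(3, 2)) : set {ffun detmap -> R} :=
  [set lam | is_distr lam /\ W = \sum_D lam D *: detmx D].

Definition C11 (lam : {ffun detmap -> R}) : R :=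
  \sum_D lam D * log2 (\rank (detmx D))%:R.

Definition C01 (lam : {ffun detmap -> R}) : R :=
  sup [set \sum_D lam D * MI mu (detmx D) | mu in [set mu : {ffun 'I_3 -> R} | is_distr mu]].

Definition Cbar11 (W : 'M[R]_(3, 2)) : R := sup [set C11 lam | lam in Lambda W].
Definition Cbar01 (W : 'M[R]_(3, 2)) : R := sup [set C01 lam | lam in Lambda W].

End Defs.

From HB Require Import structures.
From mathcomp Require Import all_boot all_order all_algebra.
From mathcomp Require Import classical_sets reals exp.
From mathcomp Require Import ring lra.
Set Implicit Arguments. Unset Strict Implicit. Unset Printing Implicit Defensive.
Import Order.TTheory GRing.Theory Num.Theory.
Local Open Scope ring_scope.

(* For a deterministic channel D, I(mu, D) is the binary entropy h of the mass that mu puts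
   on a fibre of D.  Given mu, some input k has mu k <= 1/3; every D that is constant on the
   two other inputs i, j has a fibre of mass at most mu k, so I(mu, D) <= h(1/3) < 1, while
   all other D have I(mu, D) <= 1.  In any decomposition of W, the maps with D i = D j carry
   weight at least |W_{i,1} - W_{j,2}|, which is positive because the entries of W are
   distinct.  This bounds C01 away from 1 uniformly.  Conversely, the column-sum condition
   says that the first column of W lies in the convex hull of the indicator vectors of the
   one- and two-element subsets of the inputs, so W is a mixture of non-constant, i.e.
   rank-2, deterministic channels, and C11 = 1 for that mixture. *)

Section BinaryEntropy.
Variable R : realType.

Lemma ln2_gt0 : 0 < ln (2 : R).
Proof. by apply: ln_gt0; lra. Qed.

Lemma log2V (x : R) : log2 x^-1 = - log2 x.
Proof.
rewrite /log2; have [x_gt0|x_le0] := ltrP 0 x; first by rewrite lnV ?posrE // mulNr.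
by rewrite (ln0 x_le0) (@ln0 _ x^-1) ?invr_le0 // mul0r oppr0.
Qed.

Lemma log2_2 : log2 (2 : R) = 1.
Proof. by rewrite /log2 divff // gt_eqF // ln2_gt0. Qed.

Lemma ln_le_subr1 (t : R) : 0 < t -> ln t <= t - 1.
Proof.
move=> t_gt0; have := @le_ln1Dx R (t - 1).
by rewrite (_ : 1 + (t - 1) = t); [apply; lra | ring].
Qed.

Lemma mul_ln_ge (q r : R) : 0 <= q -> 0 < r -> q * ln r + q - r <= q * ln q.
Proof.
rewrite le_eqVlt => /predU1P[<- r_gt0|q_gt0 r_gt0]; first by rewrite !mul0r add0r; lra.
have := ler_wpM2l (ltW q_gt0) (ln_le_subr1 (divr_gt0 r_gt0 q_gt0)).
rewrite ln_div ?posrE // mulrBr [q * (r / q - 1)]mulrBr mulrCA divff ?gt_eqF //.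
lra.
Qed.

Definition binary_entropy (a : R) : R := - (a * log2 a + (1 - a) * log2 (1 - a)).

Lemma binary_entropyC (a : R) : binary_entropy (1 - a) = binary_entropy a.
Proof. by rewrite /binary_entropy subKr addrC. Qed.

Lemma binary_entropy_le_cross (a r : R) : 0 <= a <= 1 -> 0 < r < 1 ->
  binary_entropy a <= - (a * log2 r + (1 - a) * log2 (1 - r)).
Proof.
move=> /andP[a_ge0 a_le1] /andP[r_gt0 r_lt1].
have := mul_ln_ge a_ge0 r_gt0; have := @mul_ln_ge (1 - a) (1 - r).
rewrite subr_ge0 subr_gt0 => /(_ a_le1 r_lt1) ineq_1a ineq_a.
rewrite /binary_entropy /log2 !mulrA -!mulrDl -!mulNr ler_pM2r ?invr_gt0 ?ln2_gt0 //.
lra.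
Qed.

Lemma binary_entropy_le1 (a : R) : 0 <= a <= 1 -> binary_entropy a <= 1.
Proof.
move=> a01; apply: (le_trans (binary_entropy_le_cross (r := 2^-1) a01 _)); first lra.
have -> : 1 - 2^-1 = 2^-1 :> R by field.
rewrite log2V log2_2; lra.
Qed.

Lemma log2_two_thirds : log2 (1 - 3^-1) = 1 - log2 (3 : R).
Proof.
have -> : 1 - 3^-1 = 2 / 3 :> R by field.
by rewrite /log2 ln_div ?posrE // mulrBl divff // gt_eqF // ln2_gt0.
Qed.

Lemma binary_entropy_third : binary_entropy 3^-1 = log2 3 - 2 / 3 :> R.
Proof. by rewrite /binary_entropy log2V log2_two_thirds; field. Qed.

Lemma binary_entropy_le_third (a : R) : 0 <= a <= 3^-1 ->
  binary_entropy a <= binary_entropy 3^-1.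
Proof.
move=> /andP[a_ge0 a_le]; have a01 : 0 <= a <= 1 by apply/andP; split; lra.
apply: (le_trans (binary_entropy_le_cross (r := 3^-1) a01 _)); first lra.
rewrite log2V log2_two_thirds binary_entropy_third; lra.
Qed.

Lemma binary_entropy_third_lt1 : binary_entropy 3^-1 < 1 :> R.
Proof.
have : ln (3 ^+ 3) < ln (2 ^+ 5 : R).
  by rewrite ltr_ln ?posrE ?exprn_gt0 // -!natrX ltr_nat.
rewrite !lnXn // binary_entropy_third /log2 => ln_lt.
rewrite ltrBlDr ltr_pdivrMr ?ln2_gt0 //; lra.
Qed.

End BinaryEntropy.

Lemma ord2P (y : 'I_2) : y = ord0 \/ y = ord_max.
Proof. by case: y => [[|[|]] y_lt]; [left | right | by []]; apply: val_inj. Qed.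

Lemma sum_ord2 (V : nmodType) (F : 'I_2 -> V) : \sum_j F j = F ord0 + F ord_max.
Proof. by rewrite big_ord_recl big_ord1; congr (_ + F _); apply: val_inj. Qed.

Lemma ord2_other (b c y : 'I_2) : b != c -> y != c -> y = b.
Proof. by have [->|->] := ord2P b; have [->|->] := ord2P c; have [->|->] := ord2P y. Qed.

Lemma ord3_complement (k : 'I_3) :
  exists i j, i != j /\ forall x, x != k -> (x == i) || (x == j).
Proof.
exists (lift k ord0), (lift k ord_max); split; first by rewrite (inj_eq (@lift_inj _ k)).
move=> x; case: (unliftP k x) => [y ->|->]; last by rewrite eqxx.
by have [->|->] := ord2P y; rewrite eqxx ?orbT.
Qed.

Lemma sum_mul_delta (T : finType) (V : pzSemiRingType) (F : T -> V) t :
  \sum_u F u * (u == t)%:R = F t.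
Proof.
rewrite (bigD1 t) //= eqxx mulr1 big1 ?addr0 // => u /negbTE ->.
by rewrite mulr0.
Qed.

Section DistributionsChannels.
Variable R : realType.

Lemma exists_le_inv_card n (nu : {ffun 'I_n.+1 -> R}) : is_distr nu ->
  exists k, nu k <= n.+1%:R^-1.
Proof.
move=> [_ nu1].
have [k nu_k|nu_gt] := pickP (fun k => nu k <= n.+1%:R^-1); first by exists k.
suff : \sum_(k < n.+1) n.+1%:R^-1 < \sum_k nu k :> R.
  by rewrite nu1 sumr_const card_ord -(mulr_natr (n.+1%:R^-1 : R)) mulVf ?pnatr_eq0 // ltxx.
apply: ltr_sum => [|k _]; last by rewrite ltNge nu_gt.
by apply/hasP; exists ord0; rewrite ?mem_index_enum.
Qed.

Lemma uniform_distr n : is_distr [ffun _ : 'I_n.+1 => n.+1%:R^-1 : R].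
Proof.
split=> [k|]; first by rewrite ffunE invr_ge0.
under eq_bigr do rewrite ffunE.
by rewrite sumr_const card_ord -(mulr_natr (n.+1%:R^-1 : R)) mulVf ?pnatr_eq0.
Qed.

Lemma channel_ge0 m n (W : 'M[R]_(m, n)) i j : is_channel W -> 0 <= W i j.
Proof. by move=> Wch; have [W_ge0 _] := Wch i; have := W_ge0 j; rewrite mxE. Qed.

Lemma channel_ord_max m (W : 'M[R]_(m, 2)) i : is_channel W -> W i ord_max = 1 - W i ord0.
Proof.
by move=> Wch; have [_] := Wch i; rewrite sum_ord2 !mxE => <-; rewrite addrAC subrr add0r.
Qed.

End DistributionsChannels.

Section DeterministicChannels.
Variable R : realType.
Implicit Types (mu : {ffun 'I_3 -> R}) (D : detmap).

Lemma outdist_detmx mu D y :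
  outdist mu (detmx R D) 0 y = \sum_(x | D x == y) mu x.
Proof.
rewrite mxE [RHS]big_mkcond; apply: eq_bigr => x _.
by rewrite mxE; case: eqP; rewrite ?mulr1 ?mulr0.
Qed.

Lemma KL_detmx_row mu D x : KL (row x (detmx R D)) (outdist mu (detmx R D)) =
  - log2 (\sum_(x' | D x' == D x) mu x').
Proof.
have rowE y : row x (detmx R D) 0 y = (D x == y)%:R by rewrite !mxE.
rewrite /KL (bigD1 (D x)) //= big1 ?addr0 => [|y yDx]; rewrite rowE.
  by rewrite eqxx oner_eq0 mul1r outdist_detmx div1r log2V.
by rewrite eq_sym in yDx; rewrite (negbTE yDx) eqxx.
Qed.

Lemma MI_detmx mu D : MI mu (detmx R D) =
  - \sum_y (\sum_(x | D x == y) mu x) * log2 (\sum_(x | D x == y) mu x).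
Proof.
rewrite /MI (partition_big D xpredT) //= -sumrN; apply: eq_bigr => y _.
rewrite mulr_suml -sumrN; apply: eq_big => // x /eqP Dx.
by rewrite KL_detmx_row Dx mulrN.
Qed.

Lemma MI_detmx_binary mu D y : is_distr mu ->
  MI mu (detmx R D) = binary_entropy (\sum_(x | D x == y) mu x).
Proof.
move=> [_ mu1]; pose q y' := \sum_(x | D x == y') mu x.
have q1 : q ord0 + q ord_max = 1 by rewrite -mu1 (partition_big D xpredT) // sum_ord2.
rewrite MI_detmx (sum_ord2 (fun y' => q y' * log2 (q y'))) -/(q y).
have q0E : 1 - q ord_max = q ord0 by rewrite -q1 addrK.
have qmaxE : 1 - q ord0 = q ord_max by rewrite -q1 addrC addKr.
have [->|->] := ord2P y; last rewrite -binary_entropyC q0E.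
all: by rewrite /binary_entropy qmaxE.
Qed.

End DeterministicChannels.

Section UpperBound.
Variable R : realType.
Implicit Types (W : 'M[R]_(3, 2)) (lam : {ffun detmap -> R}) (mu : {ffun 'I_3 -> R}).
Implicit Types (D : detmap).

Lemma decomposition_entry W lam x y : W = \sum_D lam D *: detmx R D ->
  W x y = \sum_D lam D * (D x == y)%:R.
Proof. by move=> ->; rewrite summxE; apply: eq_bigr => D _; rewrite !mxE. Qed.

Lemma norm_cross_le W lam i j : (forall D, 0 <= lam D) -> W = \sum_D lam D *: detmx R D ->
  `|W i ord0 - W j ord_max| <= \sum_(D : detmap | D i == D j) lam D.
Proof.
move=> lam_ge0 Wlam; rewrite !(decomposition_entry _ _ Wlam) -sumrB [leRHS]big_mkcond.
apply: le_trans (ler_norm_sum _ _ _) _; apply: ler_sum => D _.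
rewrite -mulrBr normrM ger0_norm //.
have [->|->] := ord2P (D i); have [->|->] := ord2P (D j);
  by rewrite /= ?subr0 ?subrr ?sub0r ?normrN ?normr0 ?normr1 ?mulr1 ?mulr0.
Qed.

Lemma sum_preim_le_single mu D y k : (forall x, 0 <= mu x) ->
  (forall x, D x == y -> x = k) -> \sum_(x | D x == y) mu x <= mu k.
Proof.
move=> mu_ge0 preim_k; apply: (@le_trans _ _ (\sum_(x | x == k) mu x)).
  rewrite [leRHS]big_mkcond [leLHS]big_mkcond /=; apply: ler_sum => x _.
  by case: ifP => [/preim_k ->|_]; rewrite ?eqxx //; case: ifP.
by rewrite big_pred1_eq.
Qed.

Lemma preim_mass_bounds mu D y : is_distr mu -> 0 <= \sum_(x | D x == y) mu x <= 1.
Proof.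
move=> [mu_ge0 mu1]; have mass_ge0 P : 0 <= \sum_(x | P x) mu x by exact: sumr_ge0.
by rewrite mass_ge0 -mu1 [leRHS](bigID (fun x => D x == y)) /= lerDl mass_ge0.
Qed.

Lemma MI_detmx_le1 mu D : is_distr mu -> MI mu (detmx R D) <= 1.
Proof.
move=> mu_distr; rewrite (MI_detmx_binary _ ord0 mu_distr).
exact/binary_entropy_le1/preim_mass_bounds.
Qed.

(* If [D] is constant on the complement [{i, j}] of [k], then only [k] is sent to the other
   output letter, so the output law has an atom of mass at most [mu k]. *)
Lemma MI_detmx_le mu D k i j : is_distr mu -> mu k <= 3^-1 ->
    (forall x, x != k -> (x == i) || (x == j)) ->
  MI mu (detmx R D) <= 1 - (1 - binary_entropy 3^-1) * (D i == D j)%:R.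
Proof.
move=> mu_distr mu_k others.
have [Dij|_] := eqVneq (D i) (D j); last by rewrite mulr0 subr0; exact: MI_detmx_le1.
have preim_k x : D x == lift (D i) ord0 -> x = k.
  by apply: contraTeq => /others /orP[] /eqP ->; rewrite -?Dij neq_lift.
rewrite mulr1 subKr (MI_detmx_binary _ (lift (D i) ord0) mu_distr).
have /andP[mass_ge0 _] := preim_mass_bounds D (lift (D i) ord0) mu_distr.
apply: binary_entropy_le_third; rewrite mass_ge0 /=.
exact: le_trans (sum_preim_le_single (proj1 mu_distr) preim_k) mu_k.
Qed.

Lemma sum_MI_le W lam mu k i j : Lambda W lam -> is_distr mu -> mu k <= 3^-1 ->
    (forall x, x != k -> (x == i) || (x == j)) ->
  \sum_D lam D * MI mu (detmx R D) <=
    1 - (1 - binary_entropy 3^-1) * `|W i ord0 - W j ord_max|.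
Proof.
move=> [[lam_ge0 lam1] Wlam] mu_distr mu_k others.
have gap_ge0 : 0 <= 1 - binary_entropy 3^-1 :> R.
  by rewrite subr_ge0; exact/ltW/binary_entropy_third_lt1.
apply: le_trans (_ : \sum_D lam D * (1 - (1 - binary_entropy 3^-1) * (D i == D j)%:R) <= _).
  apply: ler_sum => D _; apply: ler_wpM2l; first exact: lam_ge0.
  exact: MI_detmx_le mu_distr mu_k others.
rewrite (eq_bigr (fun D => lam D - (1 - binary_entropy 3^-1) * (lam D * (D i == D j)%:R))).
  rewrite sumrB lam1 -mulr_sumr lerD2l lerN2 ler_wpM2l //.
  apply: le_trans (norm_cross_le _ _ lam_ge0 Wlam) _; rewrite [leLHS]big_mkcond.
  by apply: ler_sum => D _; case: eqP; rewrite ?mulr1 ?mulr0.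
by move=> D _; rewrite mulrBr mulr1 mulrCA.
Qed.

(* The neutral element [1] of the minimum is harmless: only positivity matters. *)
Definition min_cross_dist W : R :=
  \big[Num.min/1]_(p : 'I_3 * 'I_3 | p.1 != p.2) `|W p.1 ord0 - W p.2 ord_max|.

Lemma min_cross_dist_le W i j : i != j -> min_cross_dist W <= `|W i ord0 - W j ord_max|.
Proof. by move=> ij; apply: (@bigmin_le_cond _ _ _ _ (i, j)). Qed.

Lemma min_cross_dist_gt0 W :
    (forall (i i' : 'I_3) (j j' : 'I_2), W i j = W i' j' -> i = i' /\ j = j') ->
  0 < min_cross_dist W.
Proof.
move=> W_inj; apply/bigmin_gtP; split=> // -[i j] /= ij.
by rewrite normr_gt0 subr_eq0; apply: contra ij => /eqP /W_inj [->].
Qed.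

Lemma Cbar01_le W lam : Lambda W lam ->
  Cbar01 W <= 1 - (1 - binary_entropy 3^-1) * min_cross_dist W.
Proof.
move=> Wlam; apply: ge_sup; first by exists (C01 lam), lam.
move=> _ [lam' Wlam' <-]; apply: ge_sup.
  by exists (\sum_D lam' D * MI [ffun=> 3^-1] (detmx R D)), [ffun=> 3^-1];
    first exact: uniform_distr.
move=> _ [mu mu_distr <-].
have [k mu_k] := exists_le_inv_card mu_distr.
have [i [j [ij others]]] := ord3_complement k.
apply: le_trans (sum_MI_le Wlam' mu_distr mu_k others) _.
rewrite lerD2l lerN2 ler_wpM2l ?min_cross_dist_le // subr_ge0.
exact/ltW/binary_entropy_third_lt1.
Qed.

End UpperBound.

Section LowerBound.
Variable R : realType.
Implicit Types (W : 'M[R]_(3, 2)) (lam : {ffun detmap -> R}) (D : detmap).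

Lemma log2_rank_le1 m (A : 'M[R]_(m, 2)) : log2 (\rank A)%:R <= 1 :> R.
Proof.
have := rank_leq_col A; case: (\rank A) => [|[|[|]]] // _.
- by rewrite /log2 ln0 // mul0r.
- by rewrite /log2 ln1 mul0r.
- by rewrite log2_2.
Qed.

Lemma C11_le1 lam : is_distr lam -> C11 lam <= 1.
Proof.
move=> [lam_ge0 lam1]; rewrite -lam1; apply: ler_sum => D _.
by rewrite -[leRHS]mulr1 ler_wpM2l ?log2_rank_le1.
Qed.

Lemma rank_detmx_nonconst D a b : D a != D b -> \rank (detmx R D) = 2.
Proof.
move=> Dab; apply/eqP; rewrite eqn_leq rank_leq_col /=.
pose s (y : 'I_2) := if y == D a then a else b.
have sK : cancel s D.
  move=> y; rewrite /s; case: eqP => [->|/eqP yDa] //.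
  by rewrite (@ord2_other (D b) _ _ _ yDa) // eq_sym.
pose B : 'M[R]_(2, 3) := \matrix_(y, x) (x == s y)%:R.
have BD : B *m detmx R D = 1%:M.
  apply/matrixP => y y'; rewrite !mxE (bigD1 (s y)) //= big1 => [|x /negbTE xs].
    by rewrite !mxE eqxx mul1r addr0 sK.
  by rewrite !mxE xs mul0r.
by rewrite -[X in (X <= _)%N](mxrank1 R 2) -BD mxrankM_maxr.
Qed.

Lemma C11_nonconst lam : is_distr lam ->
  (forall D, lam D != 0 -> exists a b, D a != D b) -> C11 lam = 1.
Proof.
move=> [_ lam1] nonconst; rewrite /C11 -[RHS]lam1; apply: eq_bigr => D _.
have [->|/nonconst [a [b Dab]]] := eqVneq (lam D) 0; first by rewrite mul0r.
by rewrite (rank_detmx_nonconst Dab) log2_2 mulr1.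
Qed.

Lemma Cbar11_ge W lam : Lambda W lam -> C11 lam <= Cbar11 W.
Proof.
move=> Wlam; apply: sup_upper_bound; last by exists lam.
split; first by exists (C11 lam), lam.
by exists 1 => _ [lam' [lam'_distr _] <-]; exact: C11_le1.
Qed.

(* [lift b ord0] is the letter of ['I_2] other than [b]. *)
Definition isolate (k : 'I_3) (b : 'I_2) : detmap :=
  [ffun x => if x == k then b else lift b ord0].

Lemma isolate_nonconst k b : exists a a', isolate k b a != isolate k b a'.
Proof.
exists k, (lift k ord0); have /negbTE kk' : lift k ord0 != k by rewrite eq_sym neq_lift.
by rewrite !ffunE eqxx kk' neq_lift.
Qed.

Lemma isolate0_eq0 k x : (isolate k ord0 x == ord0) = (k == x).
Proof. by rewrite ffunE [x == k]eq_sym; case: (k == x). Qed.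

Lemma isolate1_eq0 k x : (isolate k ord_max x == ord0) = (k != x).
Proof. by rewrite ffunE [x == k]eq_sym; case: (k == x). Qed.

Definition mixture (y z : 'I_3 -> R) : {ffun detmap -> R} :=
  [ffun D => \sum_k (y k * (D == isolate k ord0)%:R + z k * (D == isolate k ord_max)%:R)].

Lemma sum_mixture y z (F : detmap -> R) : \sum_D mixture y z D * F D =
  \sum_k (y k * F (isolate k ord0) + z k * F (isolate k ord_max)).
Proof.
under eq_bigr do rewrite ffunE mulr_suml.
rewrite exchange_big; apply: eq_bigr => k _.
under eq_bigr do rewrite mulrDl ![_ * _ * F _]mulrAC.
by rewrite big_split /= !sum_mul_delta.
Qed.

Lemma mixture_nonconst y z D : mixture y z D != 0 -> exists a b, D a != D b.
Proof.
rewrite ffunE => mix_neq0.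
have /existsP [k /orP[] /eqP ->] : [exists k, (D == isolate k ord0) || (D == isolate k ord_max)].
- apply: contraNT mix_neq0 => /existsPn no_isolate; rewrite big1 // => k _.
  by have /norP[/negbTE -> /negbTE ->] := no_isolate k; rewrite !mulr0 addr0.
- exact: isolate_nonconst.
- exact: isolate_nonconst.
Qed.

Lemma decomposition_col0 W lam : is_channel W -> is_distr lam ->
    (forall x, W x ord0 = \sum_D lam D * (D x == ord0)%:R) ->
  W = \sum_D lam D *: detmx R D.
Proof.
move=> Wch [_ lam1] col0; apply/matrixP => x y; rewrite summxE.
under eq_bigr do rewrite !mxE.
have [->|->] := ord2P y; first exact: col0.
rewrite channel_ord_max // col0 -{1}lam1 -sumrB; apply: eq_bigr => D _.
by have [->|->] := ord2P (D x); rewrite /= ?mulr0 ?mulr1 ?subrr ?subr0.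
Qed.

Lemma max0_cases (t : R) : Num.max 0 t = 0 /\ t <= 0 \/ Num.max 0 t = t /\ 0 <= t.
Proof. by case: (lerP 0 t) => t0; [right | left]; split => //; exact: ltW. Qed.

Lemma sum_excess_le (a : 'I_3 -> R) : (forall k, 0 <= a k <= 1) -> 1 <= \sum_k a k <= 2 ->
  \sum_k Num.max 0 (a k + 1 - \sum_x a x) <= 2 - \sum_x a x.
Proof.
move=> a01 /andP[]; set P := \sum_x a x.
have := a01 ord0; have := a01 (lift ord0 ord0); have := a01 (lift ord0 (lift ord0 ord0)).
have : P = \sum_x a x by []; rewrite !big_ord_recl !big_ord0.
case: (max0_cases (a ord0 + 1 - P)) => -[-> ?];
case: (max0_cases (a (lift ord0 ord0) + 1 - P)) => -[-> ?];
case: (max0_cases (a (lift ord0 (lift ord0 ord0)) + 1 - P)) => -[-> ?];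
by move=> *; lra.
Qed.

(* [y k] and [z k] are the weights of the maps whose fibre over [ord0] is [{k}], resp. its
   complement.  The column [a] forces [z k = y k + (P - 1 - a k)] and [\sum_k y k = 2 - P];
   [L k] is the least [y k] keeping [z k >= 0], and the slack [s] is spread evenly. *)
Lemma exists_isolate_weights (a : 'I_3 -> R) :
    (forall k, 0 <= a k <= 1) -> 1 <= \sum_k a k <= 2 ->
  exists y z : 'I_3 -> R, [/\ forall k, 0 <= y k, forall k, 0 <= z k,
    \sum_k (y k + z k) = 1 & forall x, a x = y x + (\sum_k z k - z x)].
Proof.
move=> a01 P12; pose P := \sum_k a k.
pose L k := Num.max 0 (a k + 1 - P); pose s := 2 - P - \sum_k L k.
pose y k := L k + s / 3; pose z k := y k + (P - 1 - a k).
have s3_ge0 : 0 <= s / 3 by rewrite divr_ge0 // subr_ge0 sum_excess_le.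
have L_ge k : (0 <= L k) && (a k + 1 - P <= L k) by rewrite !le_max !lexx orbT.
have sum_y : \sum_k y k = 2 - P.
  by rewrite big_split sumr_const card_ord /= /s; lra.
have sum_z : \sum_k z k = P - 1.
  by rewrite big_split /= sum_y sumrB sumr_const card_ord -/P /=; lra.
exists y, z; split=> [k|k||x].
- by have := L_ge k; rewrite /y; lra.
- by have := L_ge k; rewrite /z /y; lra.
- by rewrite big_split /= sum_y sum_z; lra.
- by rewrite sum_z /z; lra.
Qed.

Lemma exists_nonconst_decomposition W : is_channel W -> (forall j, 1 <= \sum_i W i j) ->
  exists2 lam, Lambda W lam & forall D, lam D != 0 -> exists a b, D a != D b.
Proof.
move=> Wch Wcol; pose a k := W k ord0.
have a01 k : 0 <= a k <= 1.
  by rewrite channel_ge0 //= -subr_ge0 -channel_ord_max // channel_ge0.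
have P12 : 1 <= \sum_k a k <= 2.
  have := Wcol ord_max; under eq_bigr do rewrite channel_ord_max //.
  by rewrite sumrB sumr_const card_ord Wcol /=; lra.
have [y [z [y_ge0 z_ge0 yz1 aE]]] := exists_isolate_weights a01 P12.
have lam_distr : is_distr (mixture y z).
  split=> [D|]; first by rewrite ffunE sumr_ge0 // => k _; rewrite addr_ge0 ?mulr_ge0.
  have := sum_mixture y z (fun=> 1); under eq_bigr do rewrite mulr1.
  by move=> ->; under eq_bigr do rewrite !mulr1.
exists (mixture y z); last exact: mixture_nonconst.
split=> //; apply: decomposition_col0 => // x; rewrite sum_mixture.
under eq_bigr do rewrite isolate0_eq0 isolate1_eq0.
rewrite -/(a x) aE big_split /= sum_mul_delta; congr (_ + _).
rewrite -(sum_mul_delta z x) -sumrB; apply: eq_bigr => k _.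
by case: (k == x); rewrite /= ?mulr1 ?mulr0 ?subr0 ?subrr.
Qed.

End LowerBound.

Theorem proposition24 (R : realType) (W : 'M[R]_(3, 2)) :
  is_channel W ->
  (forall (i i' : 'I_3) (j j' : 'I_2), W i j = W i' j' -> i = i' /\ j = j') ->
  (forall j : 'I_2, 1 <= \sum_i W i j) ->
  Cbar01 W < Cbar11 W.
Proof.
move=> Wch W_inj Wcol.
have [lam Wlam lam_nonconst] := exists_nonconst_decomposition Wch Wcol.
have gap_gt0 : 0 < 1 - binary_entropy 3^-1 :> R by rewrite subr_gt0 binary_entropy_third_lt1.
have dist_gt0 := min_cross_dist_gt0 W_inj.
apply: (le_lt_trans (Cbar01_le Wlam)); apply: (lt_le_trans _ (Cbar11_ge Wlam)).
by rewrite (C11_nonconst (proj1 Wlam) lam_nonconst) gtrBl mulr_gt0.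
Qed.
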